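(* Let $(\mathfrak L,\mathfrak g)$ be a Lie algebra pair over a field $\mathbb K$ of characteristic zero ($\mathfrak L$ a finite-dimensional Lie algebra, $\mathfrak g\subset\mathfrak L$ a Lie subalgebra), and let $V$ be the two-term complex $V^0=\mathfrak L\xrightarrow{d^V=\operatorname{pr}_{\mathfrak L/\mathfrak g}}V^1=\mathfrak L/\mathfrak g$, a dg $\mathfrak g$-module with $x\triangleright m=[x,m]_{\mathfrak L}$ on $\mathfrak L$ and $x\triangleright\operatorname{pr}_{\mathfrak L/\mathfrak g}(m)=\operatorname{pr}_{\mathfrak L/\mathfrak g}([x,m]_{\mathfrak L})$ on $\mathfrak L/\mathfrak g$. For any splitting $(j,\operatorname{pr}_{\mathfrak g})$ of $0\to\mathfrak g\xrightarrow{i}\mathfrak L\to\mathfrak L/\mathfrak g\to0$ (linear maps $j\colon\mathfrak L/\mathfrak g\to\mathfrak L$, $\operatorname{pr}_{\mathfrak g}\colon\mathfrak L\to\mathfrak g$ with $\operatorname{pr}_{\mathfrak g}\circ i=\mathrm{id}$, $\operatorname{pr}_{\mathfrak L/\mathfrak g}\circ j=\mathrm{id}$, $i\circ\operatorname{pr}_{\mathfrak g}+j\circ\operatorname{pr}_{\mathfrak L/\mathfrak g}=\mathrm{id}_{\mathfrak L}$), the maps $\alpha_0=\operatorname{pr}_{\mathfrak g}\colon V^0\to\mathfrak g$ and $\alpha_1\colon V^1\otimes\mathfrak g\to\mathfrak g$, $\alpha_1(b\mid x)=\operatorname{pr}_{\mathfrak g}([j(b),i(x)]_{\mathfrak L})$,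 define a dg Loday–Pirashvili module $(V,\alpha)$, and the resulting dg Loday–Pirashvili class $(V,[\alpha])$ is independent of the choice of splitting (hence canonical). Moreover, it is sent by $\mathbf H^0$ to the Loday–Pirashvili module $\mathbf H^0(V)\xrightarrow{\mathbf H^0(\alpha)}\mathfrak g$, where $\mathbf H^0(V)=\ker(d^V_0)=\mathfrak g$ and $\mathbf H^0(\alpha)$ is the identity map of $\mathfrak g$.
   Context: $\Omega_{\mathfrak g}(S)=\wedge^\bullet\mathfrak g^\vee\otimes S$ (degree $p+q$ on $\wedge^p\mathfrak g^\vee\otimes S^q$) for a dg $\mathfrak g$-module $S$, with total differential $d^S_{\mathrm{tot}}=d^S_{\mathrm{CE}}+d^S$, $d^S(\omega\otimes s)=(-1)^p\omega\otimes d^Ss$. A dg Loday–Pirashvili module $(V,\alpha)$ is a non-negative bounded dg $\mathfrak g$-module $V$ with a degree $0$ $\Omega_{\mathfrak g}$-linear map $\alpha\colon\Omega_{\mathfrak g}(V)\to\Omega_{\mathfrak g}(\mathfrak g)$ ($\mathfrak g$ in degree $0$ with adjoint action) satisfying $\alpha\circ d^V_{\mathrm{tot}}=d^{\mathfrak g}_{\mathrm{CE}}\circ\alpha$; it is generated by components $\alpha_k\colon V^k\to\wedge^k\mathfrak g^\vee\otimes\mathfrak g$, equivalently $\alpha_k\colon V^k\otimes\wedge^k\mathfrak g\to\mathfrak g$. Two such $\alpha,\alpha'$ on $V$ are homotopic if $\alpha'-\alpha=d^{\mathfrak g}_{\mathrm{CE}}\circ h+h\circ d^V_{\mathrm{tot}}$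 for some degree $-1$ $\Omega_{\mathfrak g}$-linear $h$; $(V,[\alpha])$ denotes $V$ with the homotopy class of $\alpha$. A Loday–Pirashvili module is a $\mathfrak g$-module $G$ with a $\mathfrak g$-equivariant linear map $X\colon G\to\mathfrak g$. $\mathbf H^0$ sends $(V,[\alpha])$ to $(\ker d^V_0,\alpha_0|_{\ker d^V_0})$. *)

From HB Require Import structures.
From mathcomp Require Import all_boot all_order all_algebra.
Set Implicit Arguments. Unset Strict Implicit. Unset Printing Implicit Defensive.
Import GRing.Theory.
Local Open Scope ring_scope.

Definition is_lie_bracket (K : fieldType) (L : lmodType K) (br : L -> L -> L) : Prop :=
  [/\ forall (a : K) x y z, br (a *: x + y) z = a *: br x z + br y z,
      forall (a : K) x y z, br z (a *: x + y) = a *: br z x + br z y,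
      forall x, br x x = 0
    & forall x y z, br x (br y z) + br y (br z x) + br z (br x y) = 0].

(* g-valued cochains  (elements of  wedge^k g^v (x) g)                 *)
(* A k-cochain is a function of an infinite argument list x : nat -> G *)
(* depending only on x 0, ..., x (k-1), multilinear and alternating.   *)
Section Cochains.
Variables (K : fieldType) (G : lmodType K) (brG : G -> G -> G).

Definition setarg (x : nat -> G) (n : nat) (u : G) : nat -> G :=
  fun m => if m == n then u else x m.

Definition cochain (k : nat) (c : (nat -> G) -> G) : Prop :=
  [/\ forall x y, (forall n, (n < k)%N -> x n = y n) -> c x = c y,
      forall n, (n < k)%N -> forall x (a : K) u w,
        c (setarg x n (a *: u + w)) = a *: c (setarg x n u) + c (setarg x n w)
    & forall n m x, (n < m)%N -> (m < k)%N -> x n = x m -> c x = 0].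

Definition skip1 (x : nat -> G) (i : nat) : nat -> G := fun n => x (bump i n).

(* ([x_i, x_j], x_0, .., ^x_i, .., ^x_j, ..)   for i < j *)
Definition skip2_br (x : nat -> G) (i j : nat) : nat -> G :=
  fun n => if n is n'.+1 then x (bump i (bump j.-1 n')) else brG (x i) (x j).

Definition dCE (k : nat) (c : (nat -> G) -> G) : (nat -> G) -> G := fun x =>
  \sum_(i < k.+1) (-1) ^+ i *: brG (x i) (c (skip1 x i))
  + \sum_(i < k.+1) \sum_(j < k.+1 | (i < j)%N) (-1) ^+ (i + j) *: c (skip2_br x i j).
End Cochains.

Section DgLP.
Variables (K : fieldType) (G : lmodType K) (brG : G -> G -> G).
Unset Implicit Arguments.
Variables (V : nat -> lmodType K) (d : forall k, V k -> V k.+1)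
          (act : forall k, G -> V k -> V k).
Set Implicit Arguments.

Definition dg_module : Prop :=
  [/\ (forall k (a : K) u v, d k (a *: u + v) = a *: d k u + d k v) /\
      (forall k v, d k.+1 (d k v) = 0),
      (forall k x (a : K) u v, act k x (a *: u + v) = a *: act k x u + act k x v) /\
      (forall k v (a : K) x y, act k (a *: x + y) v = a *: act k x v + act k y v),
      forall k x y v, act k (brG x y) v = act k x (act k y v) - act k y (act k x v),
      forall k x v, d k (act k x v) = act k.+1 x (d k v)
    & exists N, forall k, (N <= k)%N -> forall v : V k, v = 0].

(* The components alpha_k : V^k -> wedge^k g^v (x) g of a degree 0
   Omega_g-linear map Omega_g(V) -> Omega_g(g). *)
Definition omega_map_components (alpha : forall k, V k -> (nat -> G) -> G) : Prop :=
  forall k, (forall (a : K) u v x, alpha k (a *: u + v) x = a *: alpha k u x + alpha k v x)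
            /\ (forall v, cochain k (alpha k v)).

(* alpha o d^V_tot = d_CE o alpha, evaluated on the generators 1 (x) v *)
Definition dg_LP_module (alpha : forall k, V k -> (nat -> G) -> G) : Prop :=
  [/\ dg_module, omega_map_components alpha &
      forall k (v : V k) x,
        alpha k.+1 (d k v) x
        + \sum_(i < k.+1) (-1) ^+ i *: alpha k (act k (x i) v) (skip1 x i)
        = dCE brG k (alpha k v) x].

(* h : degree -1 Omega_g-linear map (Koszul sign convention), with
   components h_{k+1} : V^{k+1} -> wedge^k g^v (x) g ; h_0 = 0. *)
Definition homotopy_rhs (h : forall k, V k.+1 -> (nat -> G) -> G) (k : nat) :
    V k -> (nat -> G) -> G :=
  match k return V k -> (nat -> G) -> G with
  | 0 => fun v x => h 0%N (d 0%N v) x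
  | m.+1 => fun v x =>
      h m.+1 (d m.+1 v) x + dCE brG m (h m v) x
      - \sum_(i < m.+1) (-1) ^+ i *: h m (act m.+1 (x i) v) (skip1 x i)
  end.

Definition homotopic (alpha alpha' : forall k, V k -> (nat -> G) -> G) : Prop :=
  exists h : forall k, V k.+1 -> (nat -> G) -> G,
    (forall k, (forall (a : K) u v x, h k (a *: u + v) x = a *: h k u x + h k v x)
               /\ (forall v, cochain k (h k v))) /\
    forall k (v : V k) x, alpha' k v x - alpha k v x = homotopy_rhs h v x.
End DgLP.

Section TwoTerm.
Variables (K : fieldType) (L G Q : vectType K).
Variables (brL : L -> L -> L) (i : {linear G -> L}) (p : {linear L -> Q})
          (actQ : G -> Q -> Q).

Definition V2 (k : nat) : lmodType K :=
  match k with 0 => (L : lmodType K) | 1 => (Q : lmodType K) | _ => ('rV[K]_0 : lmodType K) end.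

Definition d2 (k : nat) : V2 k -> V2 k.+1 :=
  match k return V2 k -> V2 k.+1 with
  | 0 => fun m => p m
  | _ => fun _ => 0
  end.

Definition act2 (k : nat) : G -> V2 k -> V2 k :=
  match k return G -> V2 k -> V2 k with
  | 0 => fun x m => brL (i x) m
  | 1 => fun x q => actQ x q
  | _ => fun _ _ => 0
  end.

Definition alpha2 (j : Q -> L) (prg : L -> G) (k : nat) : V2 k -> (nat -> G) -> G :=
  match k return V2 k -> (nat -> G) -> G with
  | 0 => fun m _ => prg m
  | 1 => fun b x => prg (brL (j b) (i (x 0%N)))
  | _ => fun _ _ => 0
  end.

Definition is_splitting (j : {linear Q -> L}) (prg : {linear L -> G}) : Prop :=
  [/\ forall x, prg (i x) = x,
      forall q, p (j q) = q
    & forall m, i (prg m) + j (p m) = m].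
End TwoTerm.

Arguments d2 {K L Q} p k _.
Arguments act2 {K L G Q} brL i actQ k _ _.
Arguments alpha2 {K L G Q} brL i j prg k _ _.

(* Write m = i (prg m) + j (p m).  The map alpha_1 (b | x) = prg [j b, i x] measures
   how far j is from being g-equivariant.  In degree 0 the chain-map equation is just
   this decomposition of m, in degree 1 it is the Jacobi identity for [j b, [x0, x1]],
   and above degree 1 everything vanishes.  Two splittings differ by prg' - prg, which
   kills i(g) and so factors through L/g: its composite with j is a homotopy
   concentrated on V^1.  No division occurs. *)

From mathcomp Require Import all_boot all_order all_algebra.
Import GRing.Theory.
Set Implicit Arguments.
Unset Strict Implicit.
Local Open Scope ring_scope.

Section LieBracket.
Variables (K : fieldType) (L : lmodType K) (br : L -> L -> L).
Hypothesis lie : is_lie_bracket br.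

Lemma lie_br0l z : br 0 z = 0.
Proof.
have [brPl _ _ _] := lie.
by have := brPl (-1) z z z; rewrite !scaleN1r !addNr.
Qed.

Lemma lie_br0r z : br z 0 = 0.
Proof.
have [_ brPr _ _] := lie.
by have := brPr (-1) z z z; rewrite !scaleN1r !addNr.
Qed.

Lemma lie_brDl x y z : br (x + y) z = br x z + br y z.
Proof. by have [brPl _ _ _] := lie; have := brPl 1 x y z; rewrite !scale1r. Qed.

Lemma lie_brDr x y z : br z (x + y) = br z x + br z y.
Proof. by have [_ brPr _ _] := lie; have := brPr 1 x y z; rewrite !scale1r. Qed.

Lemma lie_brNl x z : br (- x) z = - br x z.
Proof.
have [brPl _ _ _] := lie.
by have := brPl (-1) x 0 z; rewrite addr0 lie_br0l addr0 !scaleN1r.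
Qed.

Lemma lie_brNr x z : br z (- x) = - br z x.
Proof.
have [_ brPr _ _] := lie.
by have := brPr (-1) x 0 z; rewrite addr0 lie_br0r addr0 !scaleN1r.
Qed.

Lemma lie_brBl x y z : br (x - y) z = br x z - br y z.
Proof. by rewrite lie_brDl lie_brNl. Qed.

Lemma lie_brC x y : br x y = - br y x.
Proof.
have [_ _ brxx _] := lie.
have := brxx (x + y); rewrite lie_brDl !lie_brDr !brxx add0r addr0.
by move/eqP; rewrite addr_eq0 => /eqP.
Qed.

Lemma lie_jacobi x y z : br (br x y) z = br x (br y z) - br y (br x z).
Proof.
have [_ _ _ jac] := lie.
have := jac x y z; rewrite (lie_brC z (br x y)) (lie_brC z x) lie_brNr.
by move/eqP; rewrite subr_eq0 eq_sym => /eqP.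
Qed.

Lemma lie_jacobi_derivation x y z : br x (br y z) = br (br x y) z + br y (br x z).
Proof. by rewrite lie_jacobi subrK. Qed.

End LieBracket.

Lemma is_lie_bracket_pullback (K : fieldType) (G L : lmodType K)
    (brG : G -> G -> G) (brL : L -> L -> L) (i : {linear G -> L}) :
  is_lie_bracket brL -> injective i ->
  {morph i : x y / brG x y >-> brL x y} -> is_lie_bracket brG.
Proof.
move=> lieL i_inj i_hom; have [brPl brPr brxx jac] := lieL.
split=> [a x y z | a x y z | x | x y z]; apply: i_inj.
- by rewrite linearP /= !i_hom linearP brPl.
- by rewrite linearP /= !i_hom linearP brPr.
- by rewrite i_hom brxx linear0.
- by rewrite !linearD /= !i_hom jac linear0.
Qed.

Section CEDifferential.
Variables (K : fieldType) (G : lmodType K) (br : G -> G -> G).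

Lemma dCE0 c x : dCE br 0 c x = br (x 0%N) (c (skip1 x 0)).
Proof. by rewrite /dCE !big_ord1 big_ord1_cond /= addr0 expr0 scale1r. Qed.

Lemma dCE1 c x :
  dCE br 1 c x = br (x 0%N) (c (skip1 x 0)) - br (x 1%N) (c (skip1 x 1))
                 - c (skip2_br br x 0 1).
Proof.
rewrite /dCE; under [X in _ + X = _]eq_bigr do rewrite big_mkcond.
rewrite !big_ord_recl !big_ord0 /= /bump /=.
by rewrite !addr0 !add0r expr0 expr1 !scale1r !scaleN1r.
Qed.

Lemma dCE_zero k x : (forall y, br y 0 = 0) -> dCE br k (fun _ => 0) x = 0.
Proof.
move=> br0r; rewrite /dCE big1 => [|l _]; last by rewrite br0r scaler0.
by rewrite add0r big1 // => l _; rewrite big1 // => m _; rewrite scaler0.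
Qed.

End CEDifferential.

Section Splitting.
Variables (K : fieldType) (L G Q : vectType K).
Variables (i : {linear G -> L}) (p : {linear L -> Q}).
Variables (j : {linear Q -> L}) (prg : {linear L -> G}).
Hypothesis splitting : is_splitting i p j prg.

Lemma splitting_jp m : j (p m) = m - i (prg m).
Proof. by have [_ _ dec] := splitting; apply: (canRL (addrK _)); rewrite addrC dec. Qed.

Lemma splitting_prgj q : prg (j q) = 0.
Proof.
have [prgi pj dec] := splitting.
apply: (can_inj prgi); rewrite linear0.
by have := dec (j q); rewrite pj => /(canRL (addrK _)); rewrite subrr.
Qed.

Lemma splitting_ker m : p m = 0 -> i (prg m) = m.
Proof. by have [_ _ dec] := splitting => pm0; rewrite -{2}(dec m) pm0 linear0 addr0. Qed.

End Splitting.

Definition splitting_homotopy (K : fieldType) (L G Q : vectType K)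
    (j : Q -> L) (prg prg' : L -> G) k : V2 L Q k.+1 -> (nat -> G) -> G :=
  match k return V2 L Q k.+1 -> (nat -> G) -> G with
  | 0 => fun b _ => prg' (j b) - prg (j b)
  | _ => fun _ _ => 0
  end.
Arguments splitting_homotopy {K L G Q} j prg prg' k _ _.

Section TwoTermComplex.
Variables (K : fieldType) (L G Q : vectType K).
Variables (brL : L -> L -> L) (brG : G -> G -> G).
Variables (i : {linear G -> L}) (p : {linear L -> Q}) (actQ : G -> Q -> Q).
Hypothesis lieL : is_lie_bracket brL.
Hypothesis i_hom : forall x y, i (brG x y) = brL (i x) (i y).
Hypothesis i_inj : injective i.
Hypothesis p_surj : forall q, exists m, p m = q.
Hypothesis actQ_def : forall x m, actQ x (p m) = p (brL (i x) m).

Let lieG : is_lie_bracket brG := is_lie_bracket_pullback lieL i_inj i_hom.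

Lemma actQPr x a u v : actQ x (a *: u + v) = a *: actQ x u + actQ x v.
Proof.
have [[m1 <-] [m2 <-]] := (p_surj u, p_surj v); have [_ brPr _ _] := lieL.
by rewrite -linearP !actQ_def brPr linearP.
Qed.

Lemma actQPl v a x y : actQ (a *: x + y) v = a *: actQ x v + actQ y v.
Proof.
have [m <-] := p_surj v; have [brPl _ _ _] := lieL.
by rewrite !actQ_def linearP brPl linearP.
Qed.

Lemma actQ_br x y v : actQ (brG x y) v = actQ x (actQ y v) - actQ y (actQ x v).
Proof. by have [m <-] := p_surj v; rewrite !actQ_def i_hom lie_jacobi // linearB. Qed.

Lemma two_term_dg_module : dg_module brG (d2 p) (act2 brL i actQ).
Proof.
have [brPl brPr _ _] := lieL.
split.
- by split=> [[|[|k]] a u v | [|[|k]] v] //=; rewrite ?linearP // scaler0 addr0.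
- split=> [[|[|k]] x a u v | [|[|k]] v a x y] /=.
  + exact: brPr.
  + exact: actQPr.
  + by rewrite scaler0 addr0.
  + by rewrite linearP brPl.
  + exact: actQPl.
  + by rewrite scaler0 addr0.
- move=> [|[|k]] x y v /=; first by rewrite i_hom lie_jacobi.
    exact: actQ_br.
  by rewrite subr0.
- by move=> [|[|k]] x v //=; rewrite actQ_def.
- by exists 2%N => -[|[|k]] // _ v; exact: thinmx0.
Qed.

Lemma alpha2_components (j : {linear Q -> L}) (prg : {linear L -> G}) :
  omega_map_components (alpha2 brL i j prg).
Proof.
have [brPl brPr _ _] := lieL.
move=> [|[|k]]; split=> [a u v x | v] /=.
- by rewrite linearP.
- by split.
- by rewrite linearP brPl linearP.
- split=> [x y eq_xy | [|n] // _ x a u w | [|n] [|m] //].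
    by rewrite eq_xy.
  by rewrite /setarg /= linearP brPr linearP.
- by rewrite scaler0 addr0.
- by split=> // *; rewrite scaler0 addr0.
Qed.

Section SplittingCocycle.
Variables (j : {linear Q -> L}) (prg : {linear L -> G}).
Hypothesis splitting : is_splitting i p j prg.

Lemma alpha1_actQ x b y :
  prg (brL (j (actQ x b)) (i y))
  = prg (brL (brL (i x) (j b)) (i y)) - brG (prg (brL (i x) (j b))) y.
Proof.
have [prgi pj _] := splitting.
by rewrite -{1}(pj b) actQ_def (splitting_jp splitting) lie_brBl // -i_hom linearB /= prgi.
Qed.

Lemma alpha2_chain_deg0 m y :
  prg (brL (j (p m)) (i y)) + prg (brL (i y) m) = brG y (prg m).
Proof.
have [prgi _ _] := splitting.
rewrite (splitting_jp splitting) lie_brBl // -i_hom linearB /= prgi.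
by rewrite (lie_brC lieL (i y)) linearN /= addrAC subrr add0r -(lie_brC lieG).
Qed.

Lemma alpha2_chain_deg1 b x0 x1 :
  prg (brL (j (actQ x0 b)) (i x1)) - prg (brL (j (actQ x1 b)) (i x0))
  = brG x0 (prg (brL (j b) (i x1))) - brG x1 (prg (brL (j b) (i x0)))
    - prg (brL (j b) (i (brG x0 x1))).
Proof.
rewrite !alpha1_actQ i_hom; set n := j b.
rewrite !(lie_brC lieL (i _) n) (lie_jacobi_derivation lieL n).
rewrite (lie_brC lieL (i x0) (brL n (i x1))) !lie_brNl // !linearN /= !(lie_brNl lieG).
rewrite (lie_brC lieG (prg _) x1) (lie_brC lieG (prg _) x0) [prg (_ - _)]linearB /=.
rewrite !opprK opprB opprK [in RHS]opprB [RHS]addrACA [LHS]addrC.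
by congr (_ + _); rewrite addrC.
Qed.

Lemma two_term_dg_LP_module :
  dg_LP_module brG (d2 p) (act2 brL i actQ) (alpha2 brL i j prg).
Proof.
split; [exact: two_term_dg_module | exact: alpha2_components |].
move=> [|[|k]] v x /=.
- by rewrite dCE0 big_ord1 expr0 scale1r alpha2_chain_deg0.
- rewrite dCE1 !big_ord_recl big_ord0 /= add0r addr0 expr0 expr1 scale1r scaleN1r.
  exact: alpha2_chain_deg1.
- rewrite dCE_zero ?big1 ?add0r // => [l _ | y]; [exact: scaler0 | exact: lie_br0r].
Qed.

End SplittingCocycle.

Section Homotopy.
Variables (j j' : {linear Q -> L}) (prg prg' : {linear L -> G}).
Hypothesis splitting : is_splitting i p j prg.
Hypothesis splitting' : is_splitting i p j' prg'.

Lemma splitting_diff_jp m : prg' (j (p m)) - prg (j (p m)) = prg' m - prg m.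
Proof.
have [prgi _ dec] := splitting; have [prgi' _ _] := splitting'.
by rewrite -{3 4}(dec m) !linearD /= prgi prgi' addrACA subrr add0r.
Qed.

Lemma splitting_homotopy_components k :
  (forall (a : K) u v x, splitting_homotopy j prg prg' k (a *: u + v) x
     = a *: splitting_homotopy j prg prg' k u x + splitting_homotopy j prg prg' k v x)
  /\ (forall v, cochain k (splitting_homotopy j prg prg' k v)).
Proof.
case: k => [|k]; split=> [a u v x | v] /=.
- by rewrite !linearP /= scalerN scalerBr addrACA.
- by split.
- by rewrite scaler0 addr0.
- by split=> // *; rewrite scaler0 addr0.
Qed.

Lemma splitting_homotopy_deg1 b y :
  prg' (brL (j' b) (i y)) - prg (brL (j b) (i y))
  = brG y (prg' (j b) - prg (j b)) - (prg' (j (actQ y b)) - prg (j (actQ y b))).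
Proof.
have [prgi pj _] := splitting; have [prgi' pj' _] := splitting'.
have j'E : j' b = i (prg (j' b)) + j b.
  by have := splitting_jp splitting (j' b); rewrite pj' => ->; rewrite addrC subrK.
have prg'j : prg' (j b) = - prg (j' b).
  have := congr1 prg' j'E; rewrite (splitting_prgj splitting') linearD /= prgi'.
  by move/eqP; rewrite eq_sym addrC addr_eq0 => /eqP.
have actE : actQ y b = p (brL (i y) (j b)) by rewrite -actQ_def pj.
rewrite actE splitting_diff_jp j'E lie_brDl // linearD /= -i_hom prgi'.
rewrite (splitting_prgj splitting) subr0 prg'j (lie_brC lieL (i y)) !linearN /=.
by rewrite (lie_brNr lieG) -(lie_brC lieG) !opprK opprD opprK addrA.
Qed.

Lemma splitting_homotopic :
  homotopic brG (d2 p) (act2 brL i actQ)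
    (alpha2 brL i j prg) (alpha2 brL i j' prg').
Proof.
exists (splitting_homotopy j prg prg'); split; first exact: splitting_homotopy_components.
move=> [|[|k]] v x /=.
- by rewrite splitting_diff_jp.
- rewrite dCE0 big_ord1 expr0 scale1r add0r; exact: splitting_homotopy_deg1.
- rewrite dCE_zero => [|z]; last exact: lie_br0r.
  by rewrite big1 ?subr0 ?addr0 // => l _; rewrite scaler0.
Qed.

End Homotopy.

End TwoTermComplex.

Unset Implicit Arguments.

Theorem proposition4p1
  (K : fieldType) (charK0 : [pchar K] =i pred0)
  (L G Q : vectType K)
  (brL : L -> L -> L) (brG : G -> G -> G)
  (i : {linear G -> L}) (p : {linear L -> Q}) (actQ : G -> Q -> Q)
  (lieL : is_lie_bracket brL)
  (i_hom : forall x y, i (brG x y) = brL (i x) (i y))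
  (i_inj : injective i)
  (p_surj : forall q, exists m, p m = q)
  (exact_mid : forall m, p m = 0 <-> exists x, m = i x)
  (actQ_def : forall x m, actQ x (p m) = p (brL (i x) m)) :
  (forall (j : {linear Q -> L}) (prg : {linear L -> G}),
      is_splitting i p j prg ->
      dg_LP_module brG (d2 p) (act2 brL i actQ) (alpha2 brL i j prg))
  /\
  (forall (j j' : {linear Q -> L}) (prg prg' : {linear L -> G}),
      is_splitting i p j prg -> is_splitting i p j' prg' ->
      homotopic brG (d2 p) (act2 brL i actQ)
        (alpha2 brL i j prg) (alpha2 brL i j' prg'))
  /\
  (forall (j : {linear Q -> L}) (prg : {linear L -> G}),
      is_splitting i p j prg ->
      (forall m : L, d2 p 0 m = 0 <-> exists x, m = i x) /\
      (forall m : L, d2 p 0 m = 0 ->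
         i (alpha2 brL i j prg 0 m (fun _ => 0)) = m)).
Proof.
split; first by move=> j prg; exact: two_term_dg_LP_module.
split; first by move=> j j' prg prg'; exact: splitting_homotopic.
move=> j prg splitting; split=> m; first exact: exact_mid.
exact: (splitting_ker splitting).
Qed.
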